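(* Let $n$ be a positive integer, let $V$ be a set with $|V|=n$, and let $\sigma:[n]\to V$ be a bijection. Let $\mathcal{P}\subseteq P_s(V)$ be a signed-increasing property, and set $d=n-\operatorname{alt}(\mathcal{P},\sigma)-1$. If $d\neq -1$, then there is a map $\varphi:V\to S^d$ (i.e. a multiset $Z=\varphi(V)\subset S^d$ of size $n$ identified with $V$) such that for every $x\in S^d$, $$\bigl(\{v\in V:\varphi(v)\in H(x)\},\ \{v\in V:\varphi(v)\in H(-x)\}\bigr)\in\mathcal{P}.$$ Moreover, if $d\geq 1$, the map $\varphi$ can be chosen injective (so that $Z$ is a set).
   Context: For a positive integer $n$, $[n]=\{1,\dots,n\}$. $S^d\subset\mathbb{R}^{d+1}$ is the unit sphere, and for $x\in S^d$, $H(x)=\{y\in S^d:\langle x,y\rangle>0\}$ is the open hemisphere centered at $x$. For $X=(x_1,\dots,x_n)\in\{+,-,0\}^n$, an alternating subsequence of $X$ is a subsequence $x_{j_1},\dots,x_{j_m}$ ($j_1<\dots<j_m$) of nonzero terms such that consecutive terms have different signs; $\operatorname{alt}(X)$ is the length of a longest alternating subsequence, with $\operatorname{alt}(0,\dots,0)=0$. Set $X^+=\{j:x_j=+\}$, $X^-=\{j:x_j=-\}$. The signed-power set of $V$ is $P_s(V)=\{(A,B):A,B\subseteq V,\ A\cap B=\varnothing\}$, partially ordered by $(A,B)\subseteq(C,D)$ iff $A\subseteq C$ and $B\subseteq D$. A signed-increasing property is a family $\mathcal{P}\subseteq P_s(V)$ such that $F_1\in\mathcal{P}$ and $F_1\subseteq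 F_2\in P_s(V)$ imply $F_2\in\mathcal{P}$. For a bijection $\sigma:[n]\to V$ and $X\in\{+,-,0\}^n$, write $X_\sigma=(\sigma(X^+),\sigma(X^-))\in P_s(V)$, and define $$\operatorname{alt}(\mathcal{P},\sigma)=\max\{\operatorname{alt}(X): X\in\{+,-,0\}^n,\ X_\sigma\notin\mathcal{P}\}.$$ *)

From mathcomp Require Import all_boot all_order all_algebra.
From mathcomp Require Import reals.
Set Implicit Arguments. Unset Strict Implicit. Unset Printing Implicit Defensive.
Import Order.TTheory GRing.Theory Num.Theory.

(* Signs: Some true = +, Some false = -, None = 0. *)
Notation sign := (option bool).

Definition alternating (s : seq sign) : bool :=
  all (fun o => o != None) s && sorted (fun a b => a != b) s.

Definition alt (n : nat) (X : n.-tuple sign) : nat :=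
  \max_(m : n.-tuple bool | alternating (mask m X)) size (mask m X).

(* X^+ and X^- as subsets of 'I_n  ([n] = {1..n} is represented by 'I_n). *)
Definition Xplus (n : nat) (X : n.-tuple sign) : {set 'I_n} :=
  [set i | tnth X i == Some true].
Definition Xminus (n : nat) (X : n.-tuple sign) : {set 'I_n} :=
  [set i | tnth X i == Some false].

Definition Xsigma (n : nat) (V : finType) (sigma : 'I_n -> V) (X : n.-tuple sign)
  : {set V} * {set V} := (sigma @: Xplus X, sigma @: Xminus X).

(* A family P of pairs of subsets of V, viewed as a subfamily of the signed
   power set P_s(V) (all members are disjoint pairs) which is upward closed in P_s(V). *)
Definition signed_increasing (V : finType) (P : pred ({set V} * {set V})) : Prop :=
  (forall F, P F -> [disjoint F.1 & F.2]) /\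
  (forall A B C D : {set V}, P (A, B) -> A \subset C -> B \subset D ->
     [disjoint C & D] -> P (C, D)).

(* alt(P, sigma) = max { alt X : X_sigma \notin P } (0 if there is no such X). *)
Definition alt_prop (n : nat) (V : finType) (P : pred ({set V} * {set V}))
  (sigma : 'I_n -> V) : nat :=
  \max_(X : n.-tuple sign | ~~ P (Xsigma sigma X)) alt X.

Local Open Scope ring_scope.

Definition dotp (R : realType) (k : nat) (x y : 'rV[R]_k) : R :=
  \sum_(i < k) x 0 i * y 0 i.

Definition sphere (R : realType) (d : nat) : pred 'rV[R]_(d.+1) :=
  fun x => dotp x x == 1.

Definition hemi (R : realType) (d : nat) (x : 'rV[R]_(d.+1)) : pred 'rV[R]_(d.+1) :=
  fun y => sphere y && (0 < dotp x y).

(* Put a = alt(P, sigma) and d + 1 = n - a, and let W be a (d+1) x n matrix of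
   full row rank whose rows are orthogonal to the value vectors
   (p(0), ..., p(n-1)) of all polynomials p of degree < a.  For x <> 0 the
   vector xW is nonzero and orthogonal to these vectors, so its sign sequence
   has more than a runs: otherwise a polynomial of degree < a with one root
   between any two consecutive runs has the sign pattern of xW, and its inner
   product with xW is positive.  Hence the sign pattern X of xW has
   alt X > alt(P, sigma), i.e. X_sigma is in P.  Mapping sigma(i) to the
   normalised i-th column of W turns "xW is positive (negative) at i" into
   "phi(sigma(i)) lies in H(x) (in H(-x))".  The same count shows that a
   nonzero xW has at most d zero entries, so any d + 1 columns of W are
   independent: no column vanishes and, for d >= 1, no two are parallel. *)

From mathcomp Require Import all_boot all_order all_algebra.
From mathcomp Require Import reals.
From mathcomp Require Import lra zify.
Import Order.TTheory GRing.Theory Num.Theory.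
Set Implicit Arguments. Unset Strict Implicit. Unset Printing Implicit Defensive.
Local Open Scope ring_scope.

Section SignOf.
Variable R : realDomainType.

Definition sign_of (r : R) : sign := if r == 0 then None else Some (0 < r).

Lemma sign_of_eq_none r : (sign_of r == None) = (r == 0).
Proof. by rewrite /sign_of; case: (r == 0). Qed.

Lemma sign_of_eq_pos r : (sign_of r == Some true) = (0 < r).
Proof. by rewrite /sign_of; case: ltrgtP. Qed.

Lemma sign_of_eq_neg r : (sign_of r == Some false) = (r < 0).
Proof. by rewrite /sign_of; case: ltrgtP. Qed.

Lemma sign_of_mul_gt0 a b : 0 < a * b -> sign_of a = sign_of b.
Proof.
move=> hab; rewrite /sign_of.
by case: (ltrgtP a 0) => ha; case: (ltrgtP b 0) => hb //; exfalso; nra.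
Qed.

Lemma sign_of_mul_le0 a b : a != 0 -> a * b <= 0 -> sign_of a != sign_of b.
Proof.
move=> a0 hab; rewrite /sign_of (negPf a0).
by case: (ltrgtP a 0) => ha; case: (ltrgtP b 0) => hb //; exfalso; nra.
Qed.

End SignOf.

Lemma alternating_rcons (s : seq sign) z : z != None ->
  alternating (rcons s z) = alternating s && (last None s != z).
Proof.
move=> zN; rewrite /alternating all_rcons zN; case: s => [|h t] /=.
  by rewrite eq_sym zN.
by rewrite rcons_path !andbA.
Qed.

Section SignRuns.
Variables (R : realDomainType) (y : nat -> R).

Fixpoint last_nonzero m : R :=
  if m is m'.+1 then (if y m' != 0 then y m' else last_nonzero m') else 0.

Fixpoint sign_runs m : nat :=
  if m is m'.+1 then
    if (y m' != 0) && (y m' * last_nonzero m' <= 0) then (sign_runs m').+1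
    else sign_runs m'
  else 0.

Lemma last_nonzero_eq0 m : last_nonzero m = 0 -> forall i, (i < m)%N -> y i = 0.
Proof.
elim: m => [//|m IH] /=; case: eqP => [ym0 /IH yi0 i|//].
by rewrite ltnS leq_eqVlt => /predU1P[->|/yi0].
Qed.

Lemma sign_runs_le_count m : (sign_runs m <= \sum_(i < m) (y i != 0%R))%N.
Proof.
elim: m => [|m IH]; first by rewrite big_ord0.
rewrite big_ord_recr /=; case: (y m != 0) => /=; last by rewrite addn0.
by case: ifP => _; rewrite ?addn1 // (leq_trans IH) ?leq_addr.
Qed.

Lemma alternating_mask_sign_runs m : exists mk : seq bool,
  let s := mask mk [seq sign_of (y i) | i <- iota 0 m] in
  [/\ size mk = m, alternating s, size s = sign_runs m
    & last None s = sign_of (last_nonzero m)].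
Proof.
elim: m => [|m [mk [size_mk alt_s size_s last_s]]].
  by exists [::]; rewrite /sign_of eqxx.
pose b := (y m != 0) && (y m * last_nonzero m <= 0).
exists (rcons mk b).
have iotaS : iota 0 m.+1 = rcons (iota 0 m) m by rewrite -addn1 iotaD cats1.
rewrite iotaS map_rcons mask_rcons ?size_map ?size_iota //= size_rcons size_mk -/b.
set s := mask mk _ in alt_s size_s last_s *.
case: (eqVneq (y m) 0) => [ym0|ym0] in b *; first by rewrite cats0.
have sgn_ym : sign_of (y m) != None by rewrite sign_of_eq_none.
case: (lerP (y m * last_nonzero m) 0) => [yl_le0|yl_gt0] /= in b *.
  rewrite cats1 alternating_rcons // alt_s last_s size_rcons size_s last_rcons.
  by rewrite eq_sym sign_of_mul_le0.
by rewrite cats0 last_s (sign_of_mul_gt0 yl_gt0).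
Qed.

End SignRuns.

Definition rowfun (R : zmodType) n (y : 'rV[R]_n) (i : nat) : R :=
  if insub i is Some k then y 0 k else 0.

Lemma rowfunE (R : zmodType) n (y : 'rV[R]_n) (k : 'I_n) : rowfun y k = y 0 k.
Proof. by rewrite /rowfun valK. Qed.

Definition sign_tuple (R : realDomainType) n (y : 'rV[R]_n) : n.-tuple sign :=
  [tuple sign_of (y 0 i) | i < n].

Lemma sign_runs_le_alt (R : realDomainType) n (y : 'rV[R]_n) :
  (sign_runs (rowfun y) n <= alt (sign_tuple y))%N.
Proof.
have [mk [size_mk alt_mk <- _]] := alternating_mask_sign_runs (rowfun y) n.
have tupleE : [seq sign_of (rowfun y i) | i <- iota 0 n] = sign_tuple y.
  by rewrite /= -val_enum_ord -map_comp; apply: eq_map => i /=; rewrite rowfunE.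
have size_mk' : size mk == n by rewrite size_mk.
rewrite tupleE in alt_mk *.
exact: (leq_bigmax_cond (Tuple size_mk') alt_mk).
Qed.

Lemma Xplus_sign_tuple (R : realDomainType) n (y : 'rV[R]_n) :
  Xplus (sign_tuple y) = [set i | 0 < y 0 i].
Proof. by apply/setP => i; rewrite !inE tnth_mktuple sign_of_eq_pos. Qed.

Lemma Xminus_sign_tuple (R : realDomainType) n (y : 'rV[R]_n) :
  Xminus (sign_tuple y) = [set i | y 0 i < 0].
Proof. by apply/setP => i; rewrite !inE tnth_mktuple sign_of_eq_neg. Qed.

Section SignRunsPoly.
Variables (R : realFieldType) (y : nat -> R).

Lemma sign_runs_poly m : last_nonzero y m != 0 -> exists p : {poly R},
  [/\ (size p <= sign_runs y m)%N,
      forall i, (i < m)%N -> y i != 0 -> 0 < p.[i%:R] * y i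
    & forall t, m.-1%:R <= t -> 0 < p.[t] * last_nonzero y m].
Proof.
elim: m => [|m IH] /=; first by rewrite eqxx.
have le_m (t : R) : m%:R <= t -> m.-1%:R <= t.
  by apply: le_trans; rewrite ler_nat leq_pred.
case: (eqVneq (y m) 0) => [ym0 /IH [p [size_p p_y p_l]]|ym0 _] /=.
  exists p; split=> // [i|t /le_m/p_l//].
  by rewrite ltnS leq_eqVlt => /predU1P[->|/p_y//]; rewrite ym0 eqxx.
case: (eqVneq (last_nonzero y m) 0) => [l0|l0].
  exists (y m)%:P; rewrite l0 mulr0 lexx size_polyC ym0; split=> // [i|t _].
    rewrite ltnS leq_eqVlt => /predU1P[->|/(last_nonzero_eq0 l0)->]; last by rewrite eqxx.
    by rewrite hornerC => _; nra.
  by rewrite hornerC; nra.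
have [p [size_p p_y p_l]] := IH l0.
have p_m : 0 < p.[m%:R] * last_nonzero y m by apply: p_l; rewrite ler_nat leq_pred.
case: lerP => [yl_le0|yl_gt0] /=; last first.
  exists p; split=> // [i|t /le_m/p_l]; last by nra.
  by rewrite ltnS leq_eqVlt => /predU1P[->|/p_y//] _; nra.
have yl_lt0 : y m * last_nonzero y m < 0 by rewrite lt_neqAle yl_le0 mulf_neq0.
(* The sign changes between the last nonzero term before m and y m:
   add a root at m - 1/2. *)
exists (p * ((m%:R - 2^-1)%:P - 'X)); split.
- apply: leq_trans (size_polyMleq _ _) _.
  by rewrite -opprB size_polyN size_XsubC addn2.
- move=> i; rewrite ltnS leq_eqVlt => /predU1P[->|lt_im y0]; rewrite !hornerE.
    by nra.
  have := p_y i lt_im y0; have : i%:R + 1 <= m%:R :> R by rewrite natr1 ler_nat.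
  nra.
- move=> t le_mt; have pl_t := p_l t (le_m t le_mt); rewrite !hornerE.
  have py_t : p.[t] * y m < 0.
    have l2 : 0 < last_nonzero y m ^+ 2 by rewrite exprn_even_gt0.
    by rewrite -(pmulr_llt0 _ l2); nra.
  have : 0 < 2^-1 :> R by rewrite invr_gt0 ltr0n.
  nra.
Qed.

End SignRunsPoly.

Lemma orthogonal_poly_sign_runs (R : realFieldType) (y : nat -> R) (n a : nat) :
  (exists2 k, (k < n)%N & y k != 0) ->
  (forall p : {poly R}, (size p <= a)%N -> \sum_(i < n) y i * p.[i%:R] = 0) ->
  (a < sign_runs y n)%N.
Proof.
move=> [k lt_kn yk0] orth; rewrite ltnNge; apply/negP => runs_le.
have l0 : last_nonzero y n != 0.
  by apply: contra yk0 => /eqP/last_nonzero_eq0/(_ k lt_kn)->.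
have [p [size_p p_y _]] := sign_runs_poly l0.
have : 0 < \sum_(i < n) y i * p.[i%:R].
  rewrite (bigD1 (Ordinal lt_kn)) //= ltr_pwDl //; first by rewrite mulrC p_y.
  apply: sumr_ge0 => i _; have [-> | yi0] := eqVneq (y i) 0; first by rewrite mul0r.
  by rewrite mulrC ltW ?p_y.
by rewrite orth ?ltxx // (leq_trans size_p).
Qed.

Lemma Vandermonde_orthogonal_poly (R : comNzRingType) n a (y : 'rV[R]_n) (p : {poly R}) :
  y *m (Vandermonde a (\row_(i < n) i%:R))^T = 0 -> (size p <= a)%N ->
  \sum_(i < n) y 0 i * p.[i%:R] = 0.
Proof.
move=> yV size_p.
under eq_bigr do rewrite (horner_coef_wide _ size_p) mulr_sumr.
rewrite exchange_big big1 // => j _.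
have yVj : \sum_(i < n) y 0 i * i%:R ^+ j = 0.
  have := congr1 (fun M : 'rV_a => M 0 j) yV; rewrite !mxE => yVj0.
  by rewrite -[RHS]yVj0; apply: eq_bigr => i _; rewrite !mxE.
under eq_bigr do rewrite mulrCA.
by rewrite -mulr_sumr yVj mulr0.
Qed.

Lemma row_free_annihilator (F : fieldType) m n k (A : 'M[F]_(m, n)) :
  (k <= m - \rank A)%N -> exists2 W : 'M[F]_(k, m), row_free W & W *m A = 0.
Proof.
rewrite -mxrank_ker => le_k; set B := row_base (kermx A).
exists (pid_mx k *m B).
  by rewrite /row_free mxrankMfree ?row_base_free // rank_pid_mx // eq_row_base.
by apply/sub_kermxP; apply: submx_trans (submxMl _ _) _; rewrite eq_row_base.
Qed.

Lemma exists_vanishing (F : fieldType) k n (W : 'M[F]_(k, n)) (S : {set 'I_n}) :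
  (#|S| < k)%N -> exists2 x : 'rV[F]_k, x != 0 & {in S, forall s, (x *m W) 0 s = 0}.
Proof.
move=> lt_Sk; set C := colsub (fun i : 'I_#|S| => enum_val i) W.
have : kermx C != 0.
  by rewrite -mxrank_eq0 mxrank_ker subn_eq0 -ltnNge (leq_ltn_trans (rank_leq_col C)).
case/rowV0Pn => x /sub_kermxP xC0 x0; exists x => // s Ss.
have := congr1 (fun M : 'rV_#|S| => M 0 (enum_rank_in Ss s)) xC0.
by rewrite /C mulmx_colsub !mxE enum_rankK_in.
Qed.

Lemma exists_subset_card (T : finType) (A : {set T}) k : (k <= #|A|)%N ->
  exists2 S : {set T}, S \subset A & #|S| = k.
Proof.
case/card_geqP => s [uniq_s <- sA]; exists [set x in s].
  by apply/subsetP => x; rewrite inE => /sA.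
by rewrite cardsE (card_uniqP uniq_s).
Qed.

Section VandermondeAnnihilator.
Variables (R : realFieldType) (n a d : nat) (W : 'M[R]_(d.+1, n)).
Hypotheses (n_eq : (d.+1 + a)%N = n) (W_free : row_free W)
  (W_ann : W *m (Vandermonde a (\row_(i < n) i%:R))^T = 0).
Implicit Type x : 'rV[R]_d.+1.

Lemma sign_runs_mulmx x : x != 0 -> (a < sign_runs (rowfun (x *m W)) n)%N.
Proof.
move=> x0; have xW0 : x *m W != 0 by rewrite mulmx_free_eq0.
apply: orthogonal_poly_sign_runs => [|p size_p].
  by have [k xWk] := rV0Pn _ xW0; exists k => //; rewrite rowfunE.
under eq_bigr do rewrite rowfunE.
by apply: (Vandermonde_orthogonal_poly (a := a)); rewrite // -mulmxA W_ann mulmx0.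
Qed.

Lemma card_zeros_mulmx x : x != 0 -> (#|[set i | (x *m W) 0 i == 0]%R| <= d)%N.
Proof.
move=> x0; set Z := [set i | _].
have nonzerosE : (\sum_(i < n) (rowfun (x *m W) i != 0%R))%N = #|~: Z|.
  rewrite -sum1dep_card [RHS]big_mkcond; apply: eq_bigr => i _.
  by rewrite rowfunE !inE; case: (_ == _).
have a_lt : (a < #|~: Z|)%N.
  by rewrite -nonzerosE (leq_trans (sign_runs_mulmx x0)) ?sign_runs_le_count.
have := cardsC Z; rewrite card_ord; lia.
Qed.

Lemma exists_vanishing_off (T : {set 'I_n}) j : #|T| = d -> j \notin T ->
  exists x, {in T, forall s, (x *m W) 0 s = 0} /\ (x *m W) 0 j != 0.
Proof.
move=> cardT jT; have [|x x0 xT] := exists_vanishing W (S := T); first by rewrite cardT.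
exists x; split=> //; apply/negP => /eqP xj.
have : j |: T \subset [set i | (x *m W) 0 i == 0%R].
  by apply/subsetP => i; rewrite !inE => /predU1P[->|/xT->]; rewrite ?xj eqxx.
move/subset_leq_card; rewrite cardsU1 jT cardT => /leq_trans/(_ (card_zeros_mulmx x0)).
by rewrite ltnn.
Qed.

Lemma mulmx_col x i : (x *m W) 0 i = (x *m col i W) 0 0.
Proof. by rewrite colEsub mulmx_colsub !mxE. Qed.

Lemma col_neq0 i : col i W != 0.
Proof.
have [|T] := @exists_subset_card _ (~: [set i]) d; first by rewrite cardsC1 card_ord; lia.
move=> /subsetP sT cardT.
have [|x [_ xi]] := exists_vanishing_off cardT (j := i).
  by apply/negP => /sT; rewrite !inE eqxx.
by apply: contraNneq xi => Wi0; rewrite mulmx_col Wi0 mulmx0 mxE.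
Qed.

Lemma col_not_parallel i j c : i != j -> (0 < d)%N -> col j W != c *: col i W.
Proof.
move=> ij d_gt0; have [|T] := @exists_subset_card _ (~: [set i; j]) d.-1.
  by have := cardsC [set i; j]; rewrite cards2 ij card_ord; lia.
move=> /subsetP sT cardT.
have iT : i \notin T by apply/negP => /sT; rewrite !inE eqxx.
have jiT : j \notin i |: T.
  by rewrite !inE negb_or eq_sym ij; apply/negP => /sT; rewrite !inE eqxx orbT.
have [|x [xT xj]] := exists_vanishing_off _ jiT; first by rewrite cardsU1 iT cardT; lia.
apply: contraNneq xj => Wj; rewrite mulmx_col Wj -scalemxAr mxE -mulmx_col.
by rewrite xT ?mulr0 // setU11.
Qed.

End VandermondeAnnihilator.

Section Normalize.
Variables (R : realType) (d : nat).
Implicit Types x u v : 'rV[R]_d.+1.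

Lemma dotpZl x u c : dotp (c *: x) u = c * dotp x u.
Proof. by rewrite /dotp mulr_sumr; apply: eq_bigr => i _; rewrite mxE mulrA. Qed.

Lemma dotpZr x u c : dotp x (c *: u) = c * dotp x u.
Proof. by rewrite /dotp mulr_sumr; apply: eq_bigr => i _; rewrite mxE mulrCA. Qed.

Lemma dotpNl x u : dotp (- x) u = - dotp x u.
Proof. by rewrite /dotp -sumrN; apply: eq_bigr => i _; rewrite mxE mulNr. Qed.

Lemma dotp_gt0 u : u != 0 -> 0 < dotp u u.
Proof.
move=> u0; have [k uk0] := rV0Pn _ u0; rewrite /dotp (bigD1 k) //= ltr_pwDl //.
- by rewrite -expr2 exprn_even_gt0.
- by apply: sumr_ge0 => i _; rewrite -expr2 sqr_ge0.
Qed.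

Lemma sphere_neq0 x : sphere x -> x != 0.
Proof.
apply: contraTneq => ->; rewrite /sphere /dotp big1 => [|i _]; last by rewrite mxE mul0r.
by rewrite eq_sym oner_eq0.
Qed.

Definition normalize u := (Num.sqrt (dotp u u))^-1 *: u.

Lemma sqrt_dotp_gt0 u : u != 0 -> 0 < Num.sqrt (dotp u u).
Proof. by move/dotp_gt0; rewrite sqrtr_gt0. Qed.

Lemma sphere_normalize u : u != 0 -> sphere (normalize u).
Proof.
move=> u0; rewrite /sphere /normalize dotpZl dotpZr mulrA -expr2 exprVn.
by rewrite sqr_sqrtr ?mulVf // ?gt_eqF ?ltW ?dotp_gt0.
Qed.

Lemma hemi_normalize x u : u != 0 -> hemi x (normalize u) = (0 < dotp x u).
Proof.
move=> u0; rewrite /hemi sphere_normalize // dotpZr.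
by rewrite pmulr_rgt0 ?invr_gt0 ?sqrt_dotp_gt0.
Qed.

Lemma normalize_eq_parallel u v : v != 0 -> normalize u = normalize v ->
  exists c, v = c *: u.
Proof.
move=> v0 uv; exists (Num.sqrt (dotp v v) / Num.sqrt (dotp u u)).
by rewrite -scalerA -/(normalize u) uv scalerA divff ?scale1r ?gt_eqF ?sqrt_dotp_gt0.
Qed.

End Normalize.

Lemma dotp_col (R : realType) k n (x : 'rV[R]_k) (W : 'M[R]_(k, n)) i :
  dotp x (col i W)^T = (x *m W) 0 i.
Proof. by rewrite /dotp !mxE; apply: eq_bigr => j _; rewrite !mxE. Qed.

Lemma alt_gt_prop n (V : finType) (P : pred ({set V} * {set V})) (sigma : 'I_n -> V)
    (X : n.-tuple sign) :
  (alt_prop P sigma < alt X)%N -> P (Xsigma sigma X).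
Proof. by apply: contraTT => nPX; rewrite -leqNgt; apply: leq_bigmax_cond. Qed.

Unset Implicit Arguments.
Theorem lemma1 (R : realType) (n : nat) (V : finType) (sigma : 'I_n -> V)
  (P : pred ({set V} * {set V})) :
  (0 < n)%N -> #|V| = n -> bijective sigma -> signed_increasing P ->
  (alt_prop P sigma < n)%N ->
  let d := (n - alt_prop P sigma - 1)%N in
  exists phi : V -> 'rV[R]_(d.+1),
    (forall v, sphere (phi v)) /\
    (forall x : 'rV[R]_(d.+1), sphere x ->
       P ([set v | hemi x (phi v)], [set v | hemi (- x) (phi v)])) /\
    ((1 <= d)%N -> injective phi).
Proof.
move=> _ _ [g sigmaK gK] _ alt_lt d; set a := alt_prop P sigma in alt_lt d *.
have n_eq : (d.+1 + a)%N = n by rewrite /d; lia.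
pose M : 'M[R]_(n, a) := (Vandermonde a (\row_(i < n) i%:R))^T.
have [|W W_free W_ann] := @row_free_annihilator R n a d.+1 M.
  by have := rank_leq_col M; lia.
have colT_neq0 i : (col i W)^T != 0 by rewrite trmx_eq0 (col_neq0 n_eq W_free W_ann).
exists (fun v => normalize (col (g v) W)^T); split; [|split].
- by move=> v; apply: sphere_normalize.
- move=> x /sphere_neq0 x0; set X := sign_tuple (x *m W).
  have sigmaE A : sigma @: A = g @^-1: A := can2_imset_pre _ sigmaK gK.
  have -> : [set v | hemi x (normalize (col (g v) W)^T)] = sigma @: Xplus X.
    rewrite Xplus_sign_tuple sigmaE; apply/setP => v.
    by rewrite !inE hemi_normalize ?dotp_col.
  have -> : [set v | hemi (- x) (normalize (col (g v) W)^T)] = sigma @: Xminus X.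
    rewrite Xminus_sign_tuple sigmaE; apply/setP => v.
    by rewrite !inE hemi_normalize ?dotpNl ?dotp_col ?oppr_gt0.
  apply: alt_gt_prop; apply: leq_trans (sign_runs_le_alt _).
  exact: (sign_runs_mulmx W_free W_ann x0).
- move=> d_gt0 u v /(normalize_eq_parallel (colT_neq0 _)) [c colE].
  apply: (can_inj gK); apply/eqP; apply: contraT => neq_uv.
  have := col_not_parallel n_eq W_free W_ann c neq_uv d_gt0.
  by rewrite -(trmxK (col (g v) W)) colE linearZ /= trmxK eqxx.
Qed.
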